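(* Let $\mathbf a=\{a_1,\dots,a_A\}$, $\mathbf b=\{b_1,\dots,b_B\}$, $\mathbf c=\{c_1,\dots,c_C\}$, $\mathbf d=\{d_1,\dots,d_D\}$ be lists of complex numbers ($A,B,C,D\in\mathbb N_0$, not all zero), $z=e^{i\psi}$, $w=e^{i\eta}$, $\sigma,\tau\in(0,\infty)$, $t\in\mathbb C\setminus\{0\}$, such that for all $i,j,k,l$: $|b_j|<|d_l|<\min\{\tau/|t|,1/\sigma\}$, $|d_la_i|<1/|t|$, and $|a_i|<|c_k|<\min\{\sigma/|t|,1/\tau\}$. Then $$\int_{-\pi}^{\pi}\frac{(\mathbf b\frac\sigma z,t\mathbf a\frac z\sigma;q)_\infty}{(\mathbf d\frac\sigma z,t\mathbf c\frac z\sigma;q)_\infty}d\psi=\int_{-\pi}^{\pi}\frac{(\mathbf a\frac\tau w,t\mathbf b\frac w\tau;q)_\infty}{(\mathbf c\frac\tau w,t\mathbf d\frac w\tau;q)_\infty}d\eta.$$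
   Context: $q\in\mathbb C$, $0<|q|<1$; $(a;q)_\infty=\prod_{j\ge0}(1-aq^j)$; for a list $\mathbf u$ and scalar $y$, $(\mathbf u y;q)_\infty=\prod_i(u_iy;q)_\infty$, and several entries separated by commas denote the product. *)

From Stdlib Require Import Reals List.
From Coquelicot Require Import Coquelicot.
Open Scope C_scope.

Fixpoint qpoch_part (a q : C) (n : nat) : C :=
  match n with
  | O => 1
  | S m => qpoch_part a q m * (1 - a * Cpow q m)
  end.

(* (a;q)_oo := the limit of the partial products (unique when it exists) *)
Definition qpoch (a q : C) : C :=
  iota (T := C_R_CompleteNormedModule) (fun x : C => filterlim (qpoch_part a q) eventually (locally x)).

(* (u y;q)_oo for a list u : prod_i (u_i y; q)_oo *)
Definition qpochL (u : list C) (y q : C) : C :=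
  fold_right (fun ui acc => qpoch (ui * y) q * acc) 1 u.

Definition eix (th : R) : C := (cos th, sin th).

(** Write [F x] for the integrand of the theorem as a function of the point
    [x] of the complex plane:
      F x = (b/x, t a x; q)_oo / (d/x, t c x; q)_oo.
    The left-hand integral is the mean of [F] over the circle [|x| = 1/sigma],
    and, after the substitution [eta -> -eta], the right-hand integral is the
    mean of [F] over the circle of centre 0 through [tau/t].  Both radii lie in
    the annulus [max |d_l| < |x| < 1 / (|t| max |c_k|)], where the
    denominators of [F] do not vanish; there [F] is holomorphic, and its
    circle means do not depend on the radius nor on the starting point of the
    parametrisation (Cauchy's theorem).

    The infinite products are only known as limits, so Cauchy's theorem is
    applied to the finite partial products [F_n] (rational expressions, hence
    visibly holomorphic) and the equality is passed to the limit using that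
    [F_n -> F] uniformly on each admissible circle. *)
From Stdlib Require Import Reals List Lra Lia.
From Coquelicot Require Import Coquelicot.
Open Scope C_scope.

Lemma Cmod_reverse_triangle (x y : C) : (Cmod x - Cmod y <= Cmod (x - y))%R.
Proof.
  assert (H := Cmod_triangle (x - y) y).
  replace (x - y + y) with x in H by ring. lra.
Qed.

Lemma Cmod_one_sub_ge (y : C) : (1 - Cmod y <= Cmod (1 - y))%R.
Proof. rewrite <- Cmod_1 at 1. apply Cmod_reverse_triangle. Qed.

Lemma Cmod_one_sub_le (y : C) : (Cmod (1 - y) <= 1 + Cmod y)%R.
Proof.
  unfold Cminus. eapply Rle_trans. apply Cmod_triangle.
  rewrite Cmod_1, Cmod_opp. lra.
Qed.

Lemma Cmod_le_coord_sum (x : C) : (Cmod x <= Rabs (fst x) + Rabs (snd x))%R.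
Proof.
  destruct x as [u v]. replace (u, v) with ((u, 0) + (0, v))%C.
  2:{ unfold Cplus; simpl; f_equal; ring. }
  eapply Rle_trans. apply Cmod_triangle.
  replace (Cmod (u, 0)) with (Rabs u). replace (Cmod (0, v)) with (Rabs v). simpl; rewrite Rplus_0_r, Rplus_0_l; lra.
  all: unfold Cmod; simpl; rewrite <- sqrt_Rsqr_abs; f_equal; unfold Rsqr; ring.
Qed.

(** Coquelicot's balls in [C] are product balls; they compare with discs. *)
Lemma Cmod_lt_ball (z w : C) (e : posreal) :
  (Cmod (w - z) < e)%R -> @ball C_UniformSpace z e w.
Proof.
  intros H. assert (Hr := Rmax_Cmod (w - z)).
  split; simpl; unfold AbsRing_ball, abs, minus, plus, opp; simpl;
    eapply Rle_lt_trans; try exact H; eapply Rle_trans; try exact Hr.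
  apply Rmax_l. apply Rmax_r.
Qed.

Lemma ball_Cmod_lt (z w : C) (e : posreal) :
  @ball C_UniformSpace z e w -> (Cmod (w - z) < 2 * e)%R.
Proof.
  intros [H1 H2]. change (Rabs (fst w + - fst z) < e)%R in H1.
  change (Rabs (snd w + - snd z) < e)%R in H2.
  eapply Rle_lt_trans. apply Cmod_le_coord_sum. simpl. lra.
Qed.

Lemma pow_unit_interval (r : R) n : (0 <= r)%R -> (r < 1)%R -> (0 <= r ^ n <= 1)%R.
Proof.
  intros H0 H1. split. apply pow_le; auto.
  induction n; simpl; [lra|].
  assert (0 <= r ^ n)%R by (apply pow_le; auto). nra.
Qed.

Lemma pow_eventually_small (r : R) : (0 <= r)%R -> (r < 1)%R ->
  forall eps, (0 < eps)%R -> exists N, forall n, (N <= n)%nat -> (r ^ n < eps)%R.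
Proof.
  intros H0 H1 eps He.
  destruct (pow_lt_1_zero r ltac:(rewrite Rabs_pos_eq; auto) eps He) as [N HN].
  exists N. intros n Hn. specialize (HN n Hn). rewrite Rabs_pos_eq in HN; auto.
  apply pow_le; auto.
Qed.

Lemma exp_le_mono (x y : R) : (x <= y)%R -> (exp x <= exp y)%R.
Proof. intros [H|H]. left; apply exp_increasing; auto. subst; lra. Qed.

Lemma lim_approx (P : nat -> C) (L : C) :
  filterlim P eventually (@locally C_UniformSpace L) ->
  forall eps, (0 < eps)%R -> forall N, exists m, (N <= m)%nat /\ (Cmod (P m - L) < eps)%R.
Proof.
  intros HL eps He N.
  destruct (proj1 (filterlim_locally P L) HL (mkposreal (eps/2) ltac:(lra))) as [M HM].
  exists (max N M). split. lia.
  specialize (HM (max N M) ltac:(lia)). apply ball_Cmod_lt in HM. simpl in HM. lra.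
Qed.

Lemma lim_dist_le (P : nat -> C) (L z : C) (B : R) N :
  filterlim P eventually (@locally C_UniformSpace L) ->
  (forall m, (N <= m)%nat -> (Cmod (P m - z) <= B)%R) -> (Cmod (L - z) <= B)%R.
Proof.
  intros HL Hb. apply le_epsilon. intros eps He.
  destruct (lim_approx P L HL eps He N) as [m [Hm Hc]].
  replace (L - z) with ((P m - z) - (P m - L)) by ring.
  eapply Rle_trans. unfold Cminus at 1. apply Cmod_triangle. rewrite Cmod_opp.
  specialize (Hb m Hm). lra.
Qed.

Lemma lim_Cmod_ge (P : nat -> C) (L : C) (B : R) N :
  filterlim P eventually (@locally C_UniformSpace L) ->
  (forall m, (N <= m)%nat -> (B <= Cmod (P m))%R) -> (B <= Cmod L)%R.
Proof.
  intros HL Hb. apply le_epsilon. intros eps He.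
  destruct (lim_approx P L HL eps He N) as [m [Hm Hc]].
  assert (H := Cmod_reverse_triangle (P m) L). specialize (Hb m Hm). lra.
Qed.

(** ** Partial q-Pochhammer products and their limits *)

Section QPochhammer.
Variable q : C.
Hypothesis Hq1 : (Cmod q < 1)%R.

Definition qp_upper_const (K : R) : R := exp (K / (1 - Cmod q)).

Definition qp_lower_const (r : R) : R := exp (- (r / (1 - r)) / (1 - Cmod q)).

Definition qp_tail_const (K : R) : R := (qp_upper_const K * K / (1 - Cmod q))%R.

(** [|1 - u| <= exp |u|], multiplied over the factors. *)
Lemma qpoch_part_upper_exp (y : C) n :
  (Cmod (qpoch_part y q n) <= exp (Cmod y * ((1 - Cmod q ^ n) / (1 - Cmod q))))%R.
Proof.
  assert (H0 := Cmod_ge_0 q).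
  induction n as [|n IH]; simpl.
  - rewrite Cmod_1. replace (1 - 1)%R with 0%R by ring.
    unfold Rdiv. rewrite Rmult_0_l, Rmult_0_r, exp_0. lra.
  - rewrite Cmod_mult.
    assert (Hf : (Cmod (1 - y * Cpow q n) <= exp (Cmod y * Cmod q ^ n))%R).
    { eapply Rle_trans. apply Cmod_one_sub_le. rewrite Cmod_mult, Cmod_pow.
      apply exp_ineq1_le. }
    eapply Rle_trans.
    apply Rmult_le_compat; try apply Cmod_ge_0. exact IH. exact Hf.
    rewrite <- exp_plus. right. f_equal. field. lra.
Qed.

Lemma qpoch_part_upper (y : C) (K : R) n : (Cmod y <= K)%R ->
  (Cmod (qpoch_part y q n) <= qp_upper_const K)%R.
Proof.
  intros HK. assert (H0 := Cmod_ge_0 q). assert (Hy := Cmod_ge_0 y).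
  eapply Rle_trans. apply qpoch_part_upper_exp. unfold qp_upper_const.
  apply exp_le_mono. assert (Hp := pow_unit_interval (Cmod q) n H0 Hq1).
  unfold Rdiv. rewrite <- Rmult_assoc. apply Rmult_le_compat_r.
  apply Rlt_le, Rinv_0_lt_compat; lra. nra.
Qed.

Lemma one_sub_ge_exp (x r : R) : (0 <= x <= r)%R -> (r < 1)%R ->
  (exp (- (x / (1 - r))) <= 1 - x)%R.
Proof.
  intros Hx Hr.
  assert (He := exp_ineq1_le (x / (1 - r))).
  assert (Hk : (1 <= exp (x / (1 - r)) * (1 - x))%R).
  { eapply Rle_trans. 2: apply Rmult_le_compat_r; [lra|exact He].
    assert (Hd : (x * (1 - x) / (1 - r) >= x)%R).
    { apply Rle_ge. apply (Rmult_le_reg_r (1 - r)); [lra|].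
      unfold Rdiv. rewrite Rmult_assoc, Rinv_l by lra. nra. }
    replace ((1 + x / (1 - r)) * (1 - x))%R
      with (1 - x + x * (1 - x) / (1 - r))%R by (field; lra).
    lra. }
  rewrite exp_Ropp. apply (Rmult_le_reg_l (exp (x / (1 - r)))). apply exp_pos.
  rewrite Rinv_r. lra. apply Rgt_not_eq, exp_pos.
Qed.

Lemma qpoch_part_lower_exp (y : C) (r : R) n : (Cmod y <= r)%R -> (r < 1)%R ->
  (exp (- (Cmod y / (1 - r)) * ((1 - Cmod q ^ n) / (1 - Cmod q)))
     <= Cmod (qpoch_part y q n))%R.
Proof.
  intros Hyr Hr. assert (H0 := Cmod_ge_0 q). assert (Hy := Cmod_ge_0 y).
  induction n as [|n IH]; simpl.
  - rewrite Cmod_1. replace (1 - 1)%R with 0%R by ring.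
    unfold Rdiv. rewrite Rmult_0_l, Rmult_0_r, exp_0. lra.
  - rewrite Cmod_mult.
    assert (Hp := pow_unit_interval (Cmod q) n H0 Hq1).
    assert (Hf : (exp (- (Cmod y * Cmod q ^ n / (1 - r)))
                    <= Cmod (1 - y * Cpow q n))%R).
    { eapply Rle_trans. 2: apply Cmod_one_sub_ge. rewrite Cmod_mult, Cmod_pow.
      apply one_sub_ge_exp; [split|]; nra. }
    eapply Rle_trans. 2: apply Rmult_le_compat;
      [apply Rlt_le, exp_pos | apply Rlt_le, exp_pos | exact IH | exact Hf].
    rewrite <- exp_plus. right. f_equal. field. lra.
Qed.

Lemma qp_lower_const_pos r : (0 < qp_lower_const r)%R.
Proof. apply exp_pos. Qed.

Lemma qpoch_part_lower (y : C) (r : R) n : (Cmod y <= r)%R -> (r < 1)%R ->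
  (qp_lower_const r <= Cmod (qpoch_part y q n))%R.
Proof.
  intros Hyr Hr. assert (H0 := Cmod_ge_0 q). assert (Hy := Cmod_ge_0 y).
  eapply Rle_trans. 2: apply qpoch_part_lower_exp; eauto. unfold qp_lower_const.
  apply exp_le_mono. assert (Hp := pow_unit_interval (Cmod q) n H0 Hq1).
  assert (A : (Cmod y / (1 - r) <= r / (1 - r))%R).
  { unfold Rdiv. apply Rmult_le_compat_r; auto. apply Rlt_le, Rinv_0_lt_compat; lra. }
  assert (B : (0 <= Cmod y / (1 - r))%R).
  { unfold Rdiv. apply Rmult_le_pos; auto. apply Rlt_le, Rinv_0_lt_compat; lra. }
  assert (C0 : (0 < / (1 - Cmod q))%R) by (apply Rinv_0_lt_compat; lra).
  assert (HP : (0 <= (1 - Cmod q ^ n) / (1 - Cmod q) <= / (1 - Cmod q))%R).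
  { unfold Rdiv. split. apply Rmult_le_pos; lra.
    replace (/ (1 - Cmod q))%R with (1 * / (1 - Cmod q))%R at 2 by ring.
    apply Rmult_le_compat_r; lra. }
  replace (- (r / (1 - r)) / (1 - Cmod q))%R
    with (- (r / (1 - r) * / (1 - Cmod q)))%R by (unfold Rdiv; ring).
  set (P := ((1 - Cmod q ^ n) / (1 - Cmod q))%R) in *.
  set (A' := (Cmod y / (1 - r))%R) in *. set (B' := (r / (1 - r))%R) in *.
  nra.
Qed.

Lemma qpoch_part_neq0 y n : (Cmod y < 1)%R -> qpoch_part y q n <> 0.
Proof.
  intros Hy. induction n as [|n IH]; simpl.
  - intro E. injection E. lra.
  - apply Cmult_neq_0; auto. intro E.
    assert (A := Cmod_one_sub_ge (y * Cpow q n)).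
    rewrite E, Cmod_0, Cmod_mult, Cmod_pow in A.
    assert (B := pow_unit_interval (Cmod q) n (Cmod_ge_0 q) Hq1).
    assert (C0 := Cmod_ge_0 y). nra.
Qed.

(** Consecutive partial products differ by [(y;q)_m y q^m]. *)
Lemma qpoch_part_step y K m : (Cmod y <= K)%R ->
  (Cmod (qpoch_part y q (S m) - qpoch_part y q m)
     <= qp_upper_const K * K * Cmod q ^ m)%R.
Proof.
  intros HK. simpl.
  replace (qpoch_part y q m * (1 - y * Cpow q m) - qpoch_part y q m)
    with (- (qpoch_part y q m * y * Cpow q m)) by ring.
  rewrite Cmod_opp, !Cmod_mult, Cmod_pow.
  assert (H1 := qpoch_part_upper y K m HK).
  assert (H2 := Cmod_ge_0 y). assert (H3 := pow_le (Cmod q) m (Cmod_ge_0 q)).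
  apply Rmult_le_compat_r; auto. apply Rmult_le_compat; auto. apply Cmod_ge_0.
Qed.

Lemma qpoch_part_cauchy y K n m : (Cmod y <= K)%R -> (n <= m)%nat ->
  (Cmod (qpoch_part y q m - qpoch_part y q n) <= qp_tail_const K * Cmod q ^ n)%R.
Proof.
  intros HK Hnm. replace m with (n + (m - n))%nat by lia.
  assert (H0 := Cmod_ge_0 q).
  assert (HK0 : (0 <= K)%R) by (eapply Rle_trans; [apply Cmod_ge_0|exact HK]).
  assert (HM : (0 <= qp_upper_const K)%R) by (apply Rlt_le, exp_pos).
  assert (Hsum : forall k, (Cmod (qpoch_part y q (n + k) - qpoch_part y q n)
      <= qp_upper_const K * K * ((Cmod q ^ n - Cmod q ^ (n + k)) / (1 - Cmod q)))%R).
  { induction k as [|k IH].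
    - rewrite Nat.add_0_r, Rminus_diag. replace (qpoch_part y q n - qpoch_part y q n) with (RtoC 0) by ring.
      rewrite Cmod_0. unfold Rdiv. rewrite Rmult_0_l, Rmult_0_r. lra.
    - rewrite <- plus_n_Sm.
      replace (qpoch_part y q (S (n + k)) - qpoch_part y q n) with
        ((qpoch_part y q (S (n + k)) - qpoch_part y q (n + k))
         + (qpoch_part y q (n + k) - qpoch_part y q n)) by ring.
      eapply Rle_trans. apply Cmod_triangle.
      eapply Rle_trans. apply Rplus_le_compat. apply (qpoch_part_step y K); auto. exact IH.
      right. simpl. field. lra. }
  eapply Rle_trans. apply Hsum.
  assert (Hp := pow_le (Cmod q) (n + (m - n)) H0).
  assert (0 <= / (1 - Cmod q))%R by (apply Rlt_le, Rinv_0_lt_compat; lra).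
  unfold qp_tail_const, Rdiv.
  replace (qp_upper_const K * K * / (1 - Cmod q) * Cmod q ^ n)%R
    with (qp_upper_const K * K * (Cmod q ^ n * / (1 - Cmod q)))%R by ring.
  apply Rmult_le_compat_l. nra. apply Rmult_le_compat_r; auto. lra.
Qed.

Lemma qpoch_part_cvg y : exists L, filterlim (qpoch_part y q) eventually (@locally C_UniformSpace L).
Proof.
  assert (H0 := Cmod_ge_0 q).
  set (K := Cmod y).
  assert (HC : (0 <= qp_tail_const K)%R).
  { unfold qp_tail_const, qp_upper_const, Rdiv. apply Rmult_le_pos. apply Rmult_le_pos.
    apply Rlt_le, exp_pos. apply Cmod_ge_0. apply Rlt_le, Rinv_0_lt_compat; lra. }
  destruct (filterlim_locally_cauchy (U := C_R_CompleteNormedModule) (F := eventually)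
              (qpoch_part y q)) as [[L HL] _]; [|exists L; exact HL].
  intros eps.
  destruct (pow_eventually_small (Cmod q) H0 Hq1 (eps / (2 * (qp_tail_const K + 1)))) as [N HN].
  { apply Rdiv_lt_0_compat. apply cond_pos. lra. }
  exists (fun n => (N <= n)%nat). split. exists N; auto.
  assert (Hb : forall u, (N <= u)%nat ->
                 (Cmod (qpoch_part y q u - qpoch_part y q N) < eps / 2)%R).
  { intros u Hu. eapply Rle_lt_trans. apply (qpoch_part_cauchy y K); [unfold K; lra|exact Hu].
    specialize (HN N (le_n N)).
    apply Rle_lt_trans with ((qp_tail_const K + 1) * Cmod q ^ N)%R.
    apply Rmult_le_compat_r. apply pow_le; auto. lra.
    apply (Rmult_lt_reg_l (/ (qp_tail_const K + 1))). apply Rinv_0_lt_compat; lra.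
    rewrite <- Rmult_assoc, Rinv_l by lra.
    replace (/ (qp_tail_const K + 1) * (eps / 2))%R
      with (eps / (2 * (qp_tail_const K + 1)))%R by (field; lra). lra. }
  intros u v Hu Hv. apply Cmod_lt_ball.
  replace (qpoch_part y q v - qpoch_part y q u)
    with ((qpoch_part y q v - qpoch_part y q N) - (qpoch_part y q u - qpoch_part y q N)) by ring.
  eapply Rle_lt_trans. unfold Cminus at 1. apply Cmod_triangle. rewrite Cmod_opp.
  assert (H1 := Hb u Hu). assert (H2 := Hb v Hv). simpl. lra.
Qed.

Lemma qpoch_is_limit y :
  filterlim (qpoch_part y q) eventually (@locally C_UniformSpace (qpoch y q)).
Proof.
  destruct (qpoch_part_cvg y) as [L HL].
  unfold qpoch.
  replace (iota (T := C_R_CompleteNormedModule)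
             (fun x : C => filterlim (qpoch_part y q) eventually (@locally C_UniformSpace x)))
    with L; [exact HL|].
  symmetry. apply (iota_unique (V:=C_R_CompleteNormedModule)); [|exact HL].
  intros z Hz. exact (filterlim_locally_unique (V:=C_R_NormedModule) (qpoch_part y q) z L Hz HL).
Qed.

Lemma qpoch_tail y K n : (Cmod y <= K)%R ->
  (Cmod (qpoch y q - qpoch_part y q n) <= qp_tail_const K * Cmod q ^ n)%R.
Proof.
  intros HK. apply (lim_dist_le _ _ _ _ n (qpoch_is_limit y)).
  intros m Hm. apply qpoch_part_cauchy; auto.
Qed.

Lemma qpoch_upper y K : (Cmod y <= K)%R -> (Cmod (qpoch y q) <= qp_upper_const K)%R.
Proof.
  intros HK. replace (qpoch y q) with (qpoch y q - 0) by ring.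
  apply (lim_dist_le _ _ _ _ 0 (qpoch_is_limit y)).
  intros m _. replace (qpoch_part y q m - 0) with (qpoch_part y q m) by ring.
  apply qpoch_part_upper; auto.
Qed.

Lemma qpoch_lower y r : (Cmod y <= r)%R -> (r < 1)%R ->
  (qp_lower_const r <= Cmod (qpoch y q))%R.
Proof.
  intros HK Hr. apply (lim_Cmod_ge _ _ _ 0 (qpoch_is_limit y)).
  intros m _. apply qpoch_part_lower; auto.
Qed.
End QPochhammer.

Definition unif_approx (S : C -> Prop) (g : nat -> C -> C) (h : C -> C) :=
  (exists M, forall n x, S x -> (Cmod (g n x) <= M /\ Cmod (h x) <= M)%R) /\
  (forall eps, (0 < eps)%R ->
     exists N, forall n x, (N <= n)%nat -> S x -> (Cmod (g n x - h x) < eps)%R).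

Definition bounded_away (S : C -> Prop) (g : nat -> C -> C) (h : C -> C) :=
  exists dl, (0 < dl)%R /\ forall n x, S x -> (dl <= Cmod (g n x) /\ dl <= Cmod (h x))%R.

Section UniformApprox.
Variable S : C -> Prop.

Lemma unif_approx_const (c : C) : unif_approx S (fun _ _ => c) (fun _ => c).
Proof.
  split. exists (Cmod c). intros; split; lra.
  intros eps He. exists 0%nat. intros. replace (c - c) with (RtoC 0) by ring.
  rewrite Cmod_0. auto.
Qed.

Lemma bounded_away_const (c : C) : c <> 0 -> bounded_away S (fun _ _ => c) (fun _ => c).
Proof.
  intros Hc. exists (Cmod c). split. apply Cmod_gt_0; exact Hc. intros; split; lra.
Qed.

Lemma unif_approx_nonneg_bound g h : unif_approx S g h ->
  exists M, (0 <= M)%R /\ forall n x, S x -> (Cmod (g n x) <= M /\ Cmod (h x) <= M)%R.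
Proof.
  intros [[M HM] _]. exists (Rmax M 0). split. apply Rmax_r.
  intros n x Hx. destruct (HM n x Hx).
  split; eapply Rle_trans; eauto; apply Rmax_l.
Qed.

Lemma unif_approx_mult g1 h1 g2 h2 : unif_approx S g1 h1 -> unif_approx S g2 h2 ->
  unif_approx S (fun n x => g1 n x * g2 n x) (fun x => h1 x * h2 x).
Proof.
  intros U1 U2.
  destruct (unif_approx_nonneg_bound _ _ U1) as [M1 [P1 HM1]].
  destruct (unif_approx_nonneg_bound _ _ U2) as [M2 [P2 HM2]].
  destruct U1 as [_ H1], U2 as [_ H2].
  split.
  - exists (M1 * M2)%R. intros n x Hx. destruct (HM1 n x Hx), (HM2 n x Hx).
    rewrite !Cmod_mult. split; apply Rmult_le_compat; auto; apply Cmod_ge_0.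
  - intros eps He. set (e := (eps / (M1 + M2 + 1))%R).
    assert (He' : (0 < e)%R) by (unfold e; apply Rdiv_lt_0_compat; lra).
    destruct (H1 e He') as [N1 HN1]. destruct (H2 e He') as [N2 HN2].
    exists (max N1 N2). intros n x Hn Hx.
    replace (g1 n x * g2 n x - h1 x * h2 x)
      with (g1 n x * (g2 n x - h2 x) + (g1 n x - h1 x) * h2 x) by ring.
    eapply Rle_lt_trans. apply Cmod_triangle. rewrite !Cmod_mult.
    destruct (HM1 n x Hx) as [A1 _]. destruct (HM2 n x Hx) as [_ A2].
    assert (B1 := HN1 n x ltac:(lia) Hx). assert (B2 := HN2 n x ltac:(lia) Hx).
    assert (C1 := Cmod_ge_0 (g1 n x)). assert (C2 := Cmod_ge_0 (h2 x)).
    assert (C3 := Cmod_ge_0 (g2 n x - h2 x)). assert (C4 := Cmod_ge_0 (g1 n x - h1 x)).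
    apply Rle_lt_trans with (e * (M1 + M2))%R. nra.
    unfold e. apply (Rmult_lt_reg_r (M1 + M2 + 1)). lra.
    replace (eps / (M1 + M2 + 1) * (M1 + M2) * (M1 + M2 + 1))%R
      with (eps * (M1 + M2))%R by (field; lra).
    nra.
Qed.

Lemma bounded_away_mult g1 h1 g2 h2 : bounded_away S g1 h1 -> bounded_away S g2 h2 ->
  bounded_away S (fun n x => g1 n x * g2 n x) (fun x => h1 x * h2 x).
Proof.
  intros [d1 [Hd1 H1]] [d2 [Hd2 H2]]. exists (d1 * d2)%R. split. nra.
  intros n x Hx. destruct (H1 n x Hx), (H2 n x Hx). rewrite !Cmod_mult.
  split; apply Rmult_le_compat; lra.
Qed.

Lemma unif_approx_inv g h : unif_approx S g h -> bounded_away S g h ->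
  unif_approx S (fun n x => / g n x) (fun x => / h x).
Proof.
  intros [_ H] [dl [Hd Hl]].
  assert (Nz : forall n x, S x -> g n x <> 0 /\ h x <> 0).
  { intros n x Hx. destruct (Hl n x Hx). split; intro E; rewrite E, Cmod_0 in *; lra. }
  split.
  - exists (/ dl)%R. intros n x Hx. destruct (Hl n x Hx), (Nz n x Hx).
    rewrite !Cmod_inv by auto. split; apply Rinv_le_contravar; auto.
  - intros eps He.
    destruct (H (eps * (dl * dl))%R ltac:(apply Rmult_lt_0_compat; [lra|nra])) as [N HN].
    exists N. intros n x Hn Hx. destruct (Hl n x Hx) as [L1 L2]. destruct (Nz n x Hx) as [Z1 Z2].
    replace (/ g n x - / h x) with (- (g n x - h x) * / (g n x * h x)) by (field; auto).
    rewrite Cmod_mult, Cmod_opp, Cmod_inv, Cmod_mult by (apply Cmult_neq_0; auto).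
    specialize (HN n x Hn Hx).
    assert (P : (dl * dl <= Cmod (g n x) * Cmod (h x))%R) by (apply Rmult_le_compat; lra).
    apply (Rmult_lt_reg_r (Cmod (g n x) * Cmod (h x))). nra.
    rewrite Rmult_assoc, Rinv_l by nra. nra.
Qed.
End UniformApprox.

Section QPochhammerLists.
Variable q : C.
Hypothesis Hq1 : (Cmod q < 1)%R.

Definition qpochL_part (u : list C) (phi : C -> C) (n : nat) (x : C) : C :=
  fold_right (fun ui acc => qpoch_part (ui * phi x) q n * acc) 1 u.

Variable S : C -> Prop.

Lemma unif_approx_qpoch (y : C -> C) K : (forall x, S x -> (Cmod (y x) <= K)%R) ->
  unif_approx S (fun n x => qpoch_part (y x) q n) (fun x => qpoch (y x) q).
Proof.
  intros HK0.
  set (K' := Rmax K 0).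
  assert (HK : forall x, S x -> (Cmod (y x) <= K')%R).
  { intros x Hx. eapply Rle_trans. apply HK0; auto. apply Rmax_l. }
  assert (Kp : (0 <= K')%R) by apply Rmax_r.
  split.
  - exists (qp_upper_const q K'). intros n x Hx. split.
    apply qpoch_part_upper; auto. apply qpoch_upper; auto.
  - intros eps He.
    assert (HC : (0 <= qp_tail_const q K')%R).
    { unfold qp_tail_const, qp_upper_const, Rdiv. apply Rmult_le_pos. apply Rmult_le_pos.
      apply Rlt_le, exp_pos. auto. apply Rlt_le, Rinv_0_lt_compat; lra. }
    destruct (pow_eventually_small (Cmod q) (Cmod_ge_0 q) Hq1 (eps / (qp_tail_const q K' + 1)))
      as [N HN].
    { apply Rdiv_lt_0_compat; lra. }
    exists N. intros n x Hn Hx.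
    replace (qpoch_part (y x) q n - qpoch (y x) q)
      with (- (qpoch (y x) q - qpoch_part (y x) q n)) by ring.
    rewrite Cmod_opp. eapply Rle_lt_trans. apply (qpoch_tail q Hq1 (y x) K' n); auto.
    specialize (HN n Hn).
    apply Rle_lt_trans with ((qp_tail_const q K' + 1) * Cmod q ^ n)%R.
    apply Rmult_le_compat_r. apply pow_le, Cmod_ge_0. lra.
    apply (Rmult_lt_reg_l (/ (qp_tail_const q K' + 1))). apply Rinv_0_lt_compat; lra.
    rewrite <- Rmult_assoc, Rinv_l by lra.
    replace (/ (qp_tail_const q K' + 1) * eps)%R
      with (eps / (qp_tail_const q K' + 1))%R by (field; lra). lra.
Qed.

Lemma bounded_away_qpoch (y : C -> C) r : (r < 1)%R -> (forall x, S x -> (Cmod (y x) <= r)%R) ->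
  bounded_away S (fun n x => qpoch_part (y x) q n) (fun x => qpoch (y x) q).
Proof.
  intros Hr HK. exists (qp_lower_const q r). split. apply qp_lower_const_pos.
  intros n x Hx. split. apply qpoch_part_lower; auto. apply qpoch_lower; auto.
Qed.

Lemma unif_approx_qpochL u phi Kp : (forall x, S x -> (Cmod (phi x) <= Kp)%R) ->
  unif_approx S (qpochL_part u phi) (fun x => qpochL u (phi x) q).
Proof.
  intros HK. induction u as [|ui u IH]; simpl.
  - apply unif_approx_const.
  - apply (unif_approx_mult S (fun n x => qpoch_part (ui * phi x) q n)
             (fun x => qpoch (ui * phi x) q)); [|exact IH].
    apply (unif_approx_qpoch (fun x => ui * phi x) (Cmod ui * Kp)). intros x Hx.
    rewrite Cmod_mult. apply Rmult_le_compat_l. apply Cmod_ge_0. auto.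
Qed.

Lemma bounded_away_qpochL u phi :
  (forall ui, In ui u -> exists r, (r < 1)%R /\ forall x, S x -> (Cmod (ui * phi x) <= r)%R) ->
  bounded_away S (qpochL_part u phi) (fun x => qpochL u (phi x) q).
Proof.
  intros H. induction u as [|ui u IH]; simpl.
  - apply bounded_away_const. intro E. injection E. lra.
  - apply (bounded_away_mult S (fun n x => qpoch_part (ui * phi x) q n)
             (fun x => qpoch (ui * phi x) q)).
    + destruct (H ui (or_introl eq_refl)) as [r [Hr Hx]].
      apply (bounded_away_qpoch (fun x => ui * phi x) r); auto.
    + apply IH. intros; apply H; right; auto.
Qed.

Lemma qpochL_part_neq0 u phi n x : (forall ui, In ui u -> (Cmod (ui * phi x) < 1)%R) ->
  qpochL_part u phi n x <> 0.
Proof.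
  intros H. induction u as [|ui u IH]; unfold qpochL_part; simpl.
  - intro E. injection E. lra.
  - apply Cmult_neq_0. apply qpoch_part_neq0; auto. apply H; left; auto.
    apply IH. intros; apply H; right; auto.
Qed.
End QPochhammerLists.

(** ** Holomorphic functions *)

Notation CK := C_AbsRing.
Notation CV := (AbsRing_NormedModule C_AbsRing).
Notation CU := (AbsRing_UniformSpace C_AbsRing).

Definition Cderiv_approx (f : C -> C) (z l : C) := forall eps, (0 < eps)%R ->
  exists dl, (0 < dl)%R /\ forall y, (Cmod (y - z) < dl)%R ->
    (Cmod (f y - f z - (y - z) * l) <= eps * Cmod (y - z))%R.

Lemma Cderiv_approx_is_derive f z l : Cderiv_approx f z l -> @is_derive CK CV f z l.
Proof.
  intros H. split. apply is_linear_scal_l.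
  intros x Hx. apply (@is_filter_lim_locally_unique CK CV) in Hx. subst x.
  intros eps. destruct (H eps (cond_pos eps)) as [d [Hd H']].
  exists (mkposreal d Hd). intros y Hy. apply H'. exact Hy.
Qed.

Lemma is_derive_Cderiv_approx f z l : @is_derive CK CV f z l -> Cderiv_approx f z l.
Proof.
  intros [_ H] eps He. specialize (H z (fun P HP => HP) (mkposreal eps He)).
  destruct H as [d Hd]. exists d. split. apply cond_pos.
  intros y Hy. apply (Hd y). exact Hy.
Qed.

Lemma Cderiv_approx_Cinv (z : C) : z <> 0 -> Cderiv_approx (fun y => / y) z (- / (z * z)).
Proof.
  intros Hz eps He.
  assert (Hm : (0 < Cmod z)%R) by exact (proj1 (Cmod_gt_0 z) Hz).
  exists (Rmin (Cmod z / 2) (eps * (Cmod z * Cmod z * Cmod z) / 2)). split.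
  { apply Rmin_pos. lra. apply Rdiv_lt_0_compat; [|lra]. repeat apply Rmult_lt_0_compat; auto. }
  intros y Hy.
  assert (Hy1 : (Cmod (y - z) < Cmod z / 2)%R) by (eapply Rlt_le_trans; [exact Hy| apply Rmin_l]).
  assert (Hy2 : (Cmod (y - z) < eps * (Cmod z * Cmod z * Cmod z) / 2)%R)
    by (eapply Rlt_le_trans; [exact Hy| apply Rmin_r]).
  assert (Hyz : (Cmod z / 2 <= Cmod y)%R).
  { assert (A := Cmod_reverse_triangle z y). replace (z - y) with (- (y - z)) in A by ring.
    rewrite Cmod_opp in A. lra. }
  assert (Hy0 : y <> 0) by (intro E; rewrite E, Cmod_0 in Hyz; lra).
  replace (/ y - / z - (y - z) * - / (z * z))
    with ((y - z) * (y - z) * / (y * (z * z))) by (field; auto).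
  rewrite !Cmod_mult, Cmod_inv, !Cmod_mult by (repeat apply Cmult_neq_0; auto).
  set (e := Cmod (y - z)) in *. assert (He0 : (0 <= e)%R) by apply Cmod_ge_0.
  rewrite Rmult_assoc, (Rmult_comm eps e). apply Rmult_le_compat_l; auto.
  assert (P : (0 < Cmod y * (Cmod z * Cmod z))%R) by (apply Rmult_lt_0_compat; nra).
  apply (Rmult_le_reg_r (Cmod y * (Cmod z * Cmod z))). exact P.
  rewrite Rmult_assoc, Rinv_l, Rmult_1_r by lra.
  apply Rle_trans with (eps * (Cmod z / 2 * (Cmod z * Cmod z)))%R.
  nra. apply Rmult_le_compat_l. lra. apply Rmult_le_compat_r. nra. auto.
Qed.

Definition holo_on (U : C -> Prop) (f : C -> C) := exists f' : C -> C,
  forall z, U z -> @is_derive CK CV f z (f' z) /\ @continuous CU CU f' z.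

Section Holomorphy.
Variable U : C -> Prop.

Lemma holo_on_continuous f z : holo_on U f -> U z -> @continuous CU CU f z.
Proof.
  intros [f' H] Hz. apply (ex_derive_continuous (K:=CK) (V:=CV)). exists (f' z). apply H; auto.
Qed.

Lemma holo_on_const (c : C) : holo_on U (fun _ => c).
Proof.
  exists (fun _ => 0). intros z _. split. apply (is_derive_const (K:=CK) (V:=CV) c z).
  apply (@continuous_const CU CU).
Qed.

Lemma holo_on_id : holo_on U (fun z => z).
Proof.
  exists (fun _ => 1). intros z _. split. apply (is_derive_id (K:=CK) z).
  apply (@continuous_const CU CU).
Qed.

Lemma holo_on_minus f g : holo_on U f -> holo_on U g -> holo_on U (fun z => f z - g z).
Proof.
  intros [f' Hf] [g' Hg]. exists (fun z => f' z - g' z). intros z Hz.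
  destruct (Hf z Hz), (Hg z Hz). split.
  - apply (is_derive_minus (K:=CK) (V:=CV) f g z (f' z) (g' z)); auto.
  - apply (continuous_minus (U:=CU) (K:=CK) (V:=CV) f' g'); auto.
Qed.

Lemma holo_on_mult f g : holo_on U f -> holo_on U g -> holo_on U (fun z => f z * g z).
Proof.
  intros Hf Hg.
  assert (Cf : forall z, U z -> @continuous CU CU f z) by (intros; apply holo_on_continuous; auto).
  assert (Cg : forall z, U z -> @continuous CU CU g z) by (intros; apply holo_on_continuous; auto).
  destruct Hf as [f' Hf]. destruct Hg as [g' Hg].
  exists (fun z => f' z * g z + f z * g' z). intros z Hz. destruct (Hf z Hz), (Hg z Hz). split.
  - apply (is_derive_mult (K:=CK) f g z (f' z) (g' z)); auto. intros; apply Cmult_comm.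
  - apply (continuous_plus (U:=CU) (K:=CK) (V:=CV) (fun z => f' z * g z) (fun z => f z * g' z)).
    apply (continuous_mult (U:=CU) (K:=CK) f' g); auto.
    apply (continuous_mult (U:=CU) (K:=CK) f g'); auto.
Qed.

Lemma holo_on_inv f : holo_on U f -> (forall z, U z -> f z <> 0) -> holo_on U (fun z => / f z).
Proof.
  intros Hf Hnz.
  assert (Cf : forall z, U z -> @continuous CU CU f z) by (intros; apply holo_on_continuous; auto).
  assert (Cinv : forall y : C, y <> 0 -> @continuous CU CU (fun y => / y) y).
  { intros y Hy. apply (ex_derive_continuous (K:=CK) (V:=CV)). eexists.
    apply Cderiv_approx_is_derive, Cderiv_approx_Cinv, Hy. }
  destruct Hf as [f' Hf].
  exists (fun z => f' z * (- / (f z * f z))). intros z Hz. destruct (Hf z Hz). split.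
  - apply (is_derive_comp (K:=CK) (V:=CV) (fun y => / y) f z); auto.
    apply Cderiv_approx_is_derive, Cderiv_approx_Cinv. auto.
  - apply (continuous_mult (U:=CU) (K:=CK) f' (fun z => - / (f z * f z))); auto.
    apply (@continuous_comp CU CU CU f (fun y => - / (y * y))); auto.
    apply (continuous_opp (U:=CU) (K:=CK) (V:=CV) (fun y => / (y * y))).
    apply (@continuous_comp CU CU CU (fun y => y * y) (fun y => / y)).
    apply (continuous_mult (U:=CU) (K:=CK) (fun y => y) (fun y => y)); apply (@continuous_id CU).
    apply Cinv, Cmult_neq_0; auto.
Qed.

Lemma holo_on_qpochL_part q u phi n : holo_on U phi -> holo_on U (qpochL_part q u phi n).
Proof.
  intros Hp.
  assert (Hfac : forall y, holo_on U y -> holo_on U (fun x => qpoch_part (y x) q n)).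
  { intros y Hy. induction n as [|n IH]; simpl.
    - apply holo_on_const.
    - apply (holo_on_mult (fun x => qpoch_part (y x) q n) (fun x => 1 - y x * Cpow q n)); auto.
      apply (holo_on_minus (fun _ => 1) (fun x => y x * Cpow q n)). apply holo_on_const.
      apply (holo_on_mult y (fun _ => Cpow q n)); auto. apply holo_on_const. }
  induction u as [|ui u IH]; unfold qpochL_part; simpl.
  - apply holo_on_const.
  - apply (holo_on_mult (fun x => qpoch_part (ui * phi x) q n) (qpochL_part q u phi n)); auto.
    apply (Hfac (fun x => ui * phi x)). apply (holo_on_mult (fun _ => ui) phi); auto.
    apply holo_on_const.
Qed.
End Holomorphy.

(** Real
    and imaginary parts are the two instances; they let the real-variable
    calculus of Coquelicot be applied to complex-valued functions. *)
Definition real_coord (k : C -> R) :=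
  (forall z w, k (z - w) = (k z - k w)%R) /\
  (forall (r : R) z, k (RtoC r * z) = (r * k z)%R) /\
  (forall z, (Rabs (k z) <= Cmod z)%R).

Lemma real_coord_fst : real_coord fst.
Proof.
  split; [|split].
  - intros [] []; simpl; ring.
  - intros r []; simpl; ring.
  - intros z. eapply Rle_trans. 2: apply Rmax_Cmod. apply Rmax_l.
Qed.

Lemma real_coord_snd : real_coord snd.
Proof.
  split; [|split].
  - intros [] []; simpl; ring.
  - intros r []; simpl; ring.
  - intros z. eapply Rle_trans. 2: apply Rmax_Cmod. apply Rmax_r.
Qed.

Definition path_deriv (g : R -> C) (x : R) (m : C) := forall eps, (0 < eps)%R ->
  exists dl, (0 < dl)%R /\ forall s, (Rabs (s - x) < dl)%R ->
    (Cmod (g s - g x - RtoC (s - x) * m) <= eps * Rabs (s - x))%R.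

Definition path_cont (g : R -> C) (x : R) := forall eps, (0 < eps)%R ->
  exists dl, (0 < dl)%R /\ forall s, (Rabs (s - x) < dl)%R -> (Cmod (g s - g x) < eps)%R.

Lemma path_deriv_lipschitz g x m : path_deriv g x m -> exists dl, (0 < dl)%R /\
  forall s, (Rabs (s - x) < dl)%R -> (Cmod (g s - g x) <= (Cmod m + 1) * Rabs (s - x))%R.
Proof.
  intros H. destruct (H 1%R Rlt_0_1) as [d [Hd H']]. exists d. split; auto.
  intros s Hs. specialize (H' s Hs).
  replace (g s - g x) with ((g s - g x - RtoC (s - x) * m) + RtoC (s - x) * m) by ring.
  eapply Rle_trans. apply Cmod_triangle. rewrite Cmod_mult, Cmod_R. nra.
Qed.

Lemma path_deriv_cont g x m : path_deriv g x m -> path_cont g x.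
Proof.
  intros H eps He. destruct (path_deriv_lipschitz g x m H) as [d [Hd H']].
  assert (Hm := Cmod_ge_0 m).
  exists (Rmin d (eps / (Cmod m + 2))). split.
  { apply Rmin_pos; auto. apply Rdiv_lt_0_compat; lra. }
  intros s Hs. eapply Rle_lt_trans. apply H'. eapply Rlt_le_trans; [exact Hs|apply Rmin_l].
  assert (Hs2 : (Rabs (s - x) < eps / (Cmod m + 2))%R)
    by (eapply Rlt_le_trans; [exact Hs|apply Rmin_r]).
  apply Rle_lt_trans with ((Cmod m + 2) * Rabs (s - x))%R.
  apply Rmult_le_compat_r. apply Rabs_pos. lra.
  apply (Rmult_lt_reg_l (/ (Cmod m + 2))). apply Rinv_0_lt_compat; lra.
  rewrite <- Rmult_assoc, Rinv_l by lra.
  replace (/ (Cmod m + 2) * eps)%R with (eps / (Cmod m + 2))%R by (unfold Rdiv; ring). lra.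
Qed.

Lemma path_deriv_comp f g x l m : Cderiv_approx f (g x) l -> path_deriv g x m ->
  path_deriv (fun s => f (g s)) x (m * l).
Proof.
  intros Hf Hg eps He.
  set (A := (Cmod m + 1)%R). assert (HA : (1 <= A)%R) by (unfold A; assert (H := Cmod_ge_0 m); lra).
  assert (Hl := Cmod_ge_0 l).
  destruct (Hf (eps / (2 * A))%R ltac:(apply Rdiv_lt_0_compat; lra)) as [d1 [Hd1 H1]].
  destruct (Hg (eps / (2 * (Cmod l + 1)))%R ltac:(apply Rdiv_lt_0_compat; lra)) as [d2 [Hd2 H2]].
  destruct (path_deriv_lipschitz g x m Hg) as [d3 [Hd3 H3]].
  exists (Rmin (Rmin d2 d3) (d1 / A)). split.
  { apply Rmin_pos. apply Rmin_pos; auto. apply Rdiv_lt_0_compat; lra. }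
  intros s Hs.
  assert (Hs2 : (Rabs (s - x) < d2)%R)
    by (eapply Rlt_le_trans; [exact Hs|]; eapply Rle_trans; [apply Rmin_l|apply Rmin_l]).
  assert (Hs3 : (Rabs (s - x) < d3)%R)
    by (eapply Rlt_le_trans; [exact Hs|]; eapply Rle_trans; [apply Rmin_l|apply Rmin_r]).
  assert (Hs1 : (Rabs (s - x) < d1 / A)%R) by (eapply Rlt_le_trans; [exact Hs|apply Rmin_r]).
  specialize (H3 s Hs3). fold A in H3. specialize (H2 s Hs2).
  assert (Hr := Rabs_pos (s - x)).
  assert (Hgs : (Cmod (g s - g x) < d1)%R).
  { eapply Rle_lt_trans. exact H3. apply (Rmult_lt_reg_l (/ A)). apply Rinv_0_lt_compat; lra.
    rewrite <- Rmult_assoc, Rinv_l by lra.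
    replace (/ A * d1)%R with (d1 / A)%R by (unfold Rdiv; ring). lra. }
  specialize (H1 (g s) Hgs).
  replace (f (g s) - f (g x) - RtoC (s - x) * (m * l)) with
    ((f (g s) - f (g x) - (g s - g x) * l) + (g s - g x - RtoC (s - x) * m) * l) by ring.
  eapply Rle_trans. apply Cmod_triangle. rewrite (Cmod_mult _ l).
  apply Rle_trans with (eps / 2 * Rabs (s - x) + eps / 2 * Rabs (s - x))%R; [|lra].
  apply Rplus_le_compat.
  - eapply Rle_trans. exact H1.
    apply Rle_trans with (eps / (2 * A) * (A * Rabs (s - x)))%R.
    apply Rmult_le_compat_l. apply Rlt_le, Rdiv_lt_0_compat; lra. exact H3.
    right. field. lra.
  - apply Rle_trans with (eps / (2 * (Cmod l + 1)) * Rabs (s - x) * (Cmod l + 1))%R.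
    apply Rmult_le_compat; auto. apply Cmod_ge_0. lra.
    right. field. lra.
Qed.

Lemma path_deriv_scal c g x m : path_deriv g x m -> path_deriv (fun s => c * g s) x (c * m).
Proof.
  intros H eps He. assert (Hc := Cmod_ge_0 c).
  destruct (H (eps / (Cmod c + 1))%R ltac:(apply Rdiv_lt_0_compat; lra)) as [d [Hd H']].
  exists d. split; auto. intros s Hs. specialize (H' s Hs).
  replace (c * g s - c * g x - RtoC (s - x) * (c * m))
    with (c * (g s - g x - RtoC (s - x) * m)) by ring.
  rewrite Cmod_mult. assert (Hr := Rabs_pos (s - x)).
  apply Rle_trans with ((Cmod c + 1) * (eps / (Cmod c + 1) * Rabs (s - x)))%R.
  apply Rmult_le_compat; auto; try lra. apply Cmod_ge_0.
  right. field. lra.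
Qed.

Lemma is_derive_approx (f : R -> R) x l : is_derive f x l ->
  forall eps, (0 < eps)%R -> exists dl, (0 < dl)%R /\ forall s, (Rabs (s - x) < dl)%R ->
    (Rabs (f s - f x - (s - x) * l) <= eps * Rabs (s - x))%R.
Proof.
  intros H eps He. apply is_derive_Reals in H.
  destruct (H eps He) as [d Hd]. exists d. split. apply cond_pos.
  intros s Hs. destruct (Req_dec s x) as [E|E].
  - subst. replace (x - x)%R with 0%R by ring. rewrite Rabs_R0.
    replace (f x - f x - 0 * l)%R with 0%R by ring. rewrite Rabs_R0. lra.
  - specialize (Hd (s - x)%R ltac:(lra) Hs). replace (x + (s - x))%R with s in Hd by ring.
    replace (f s - f x - (s - x) * l)%R with ((s - x) * ((f s - f x) / (s - x) - l))%R
      by (field; lra).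
    rewrite Rabs_mult, Rmult_comm. apply Rmult_le_compat_r. apply Rabs_pos. lra.
Qed.

Lemma approx_is_derive (f : R -> R) x l :
  (forall eps, (0 < eps)%R -> exists dl, (0 < dl)%R /\ forall s, (Rabs (s - x) < dl)%R ->
     (Rabs (f s - f x - (s - x) * l) <= eps * Rabs (s - x))%R) ->
  is_derive f x l.
Proof.
  intros H. apply is_derive_Reals. intros eps He.
  destruct (H (eps / 2)%R ltac:(lra)) as [d [Hd H']]. exists (mkposreal d Hd).
  intros h Hh Hhd. specialize (H' (x + h)%R). replace (x + h - x)%R with h in H' by ring.
  specialize (H' Hhd).
  replace ((f (x + h) - f x) / h - l)%R with ((f (x + h) - f x - h * l) / h)%R by (field; auto).
  unfold Rdiv. rewrite Rabs_mult, Rabs_inv. assert (Rabs h > 0)%R by (apply Rabs_pos_lt; auto).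
  apply Rle_lt_trans with (eps / 2 * Rabs h * / Rabs h)%R.
  apply Rmult_le_compat_r. apply Rlt_le, Rinv_0_lt_compat; lra. exact H'.
  field_simplify; lra.
Qed.

Lemma path_deriv_of_parts (g : R -> C) (x : R) (m : C) :
  is_derive (fun s => fst (g s)) x (fst m) -> is_derive (fun s => snd (g s)) x (snd m) ->
  path_deriv g x m.
Proof.
  intros H1 H2 eps He.
  destruct (is_derive_approx _ _ _ H1 (eps/2)%R ltac:(lra)) as [d1 [Hd1 A1]].
  destruct (is_derive_approx _ _ _ H2 (eps/2)%R ltac:(lra)) as [d2 [Hd2 A2]].
  exists (Rmin d1 d2). split. apply Rmin_pos; auto. intros s Hs.
  specialize (A1 s ltac:(eapply Rlt_le_trans; [exact Hs|apply Rmin_l])).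
  specialize (A2 s ltac:(eapply Rlt_le_trans; [exact Hs|apply Rmin_r])).
  eapply Rle_trans. apply Cmod_le_coord_sum.
  replace (fst (g s - g x - RtoC (s - x) * m))
    with (fst (g s) - fst (g x) - (s - x) * fst m)%R by (simpl; ring).
  replace (snd (g s - g x - RtoC (s - x) * m))
    with (snd (g s) - snd (g x) - (s - x) * snd m)%R by (simpl; ring).
  lra.
Qed.

Lemma path_cont_of_parts (g : R -> C) x : continuous (fun s => fst (g s)) x ->
  continuous (fun s => snd (g s)) x -> path_cont g x.
Proof.
  intros H1 H2 eps He.
  destruct (proj1 (filterlim_locally _ _) H1 (mkposreal (eps/2) ltac:(lra))) as [d1 A1].
  destruct (proj1 (filterlim_locally _ _) H2 (mkposreal (eps/2) ltac:(lra))) as [d2 A2].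
  exists (Rmin d1 d2). split. apply Rmin_pos; apply cond_pos. intros s Hs.
  specialize (A1 s ltac:(eapply Rlt_le_trans; [exact Hs|apply Rmin_l])).
  specialize (A2 s ltac:(eapply Rlt_le_trans; [exact Hs|apply Rmin_r])).
  change (Rabs (fst (g s) - fst (g x)) < eps / 2)%R in A1.
  change (Rabs (snd (g s) - snd (g x)) < eps / 2)%R in A2.
  eapply Rle_lt_trans. apply Cmod_le_coord_sum.
  replace (fst (g s - g x)) with (fst (g s) - fst (g x))%R by (simpl; ring).
  replace (snd (g s - g x)) with (snd (g s) - snd (g x))%R by (simpl; ring).
  lra.
Qed.

Lemma path_deriv_eix x : path_deriv eix x (Ci * eix x).
Proof.
  apply path_deriv_of_parts; unfold eix; simpl.
  - replace (0 * cos x - 1 * sin x)%R with (- sin x)%R by ring. apply is_derive_cos.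
  - replace (0 * sin x + 1 * cos x)%R with (cos x)%R by ring. apply is_derive_sin.
Qed.

Definition cont2 (G : R -> R -> C) (x y : R) := forall eps, (0 < eps)%R ->
  exists dl, (0 < dl)%R /\ forall u v, (Rabs (u - x) < dl)%R -> (Rabs (v - y) < dl)%R ->
    (Cmod (G u v - G x y) < eps)%R.

Lemma cont2_of_first (g : R -> C) x y : path_cont g x -> cont2 (fun u v => g u) x y.
Proof. intros H eps He. destruct (H eps He) as [d [Hd H']]. exists d. split; auto. Qed.

Lemma cont2_of_second (g : R -> C) x y : path_cont g y -> cont2 (fun u v => g v) x y.
Proof. intros H eps He. destruct (H eps He) as [d [Hd H']]. exists d. split; auto. Qed.

Lemma cont2_mult G1 G2 x y : cont2 G1 x y -> cont2 G2 x y ->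
  cont2 (fun u v => G1 u v * G2 u v) x y.
Proof.
  intros H1 H2 eps He.
  set (A := (Cmod (G1 x y) + Cmod (G2 x y) + 2)%R).
  assert (P1 := Cmod_ge_0 (G1 x y)). assert (P2 := Cmod_ge_0 (G2 x y)).
  set (e := Rmin 1 (eps / A)).
  assert (HA : (0 < A)%R) by (unfold A; lra).
  assert (He' : (0 < e)%R) by (apply Rmin_pos; [lra|apply Rdiv_lt_0_compat; lra]).
  destruct (H1 e He') as [d1 [Hd1 A1]]. destruct (H2 e He') as [d2 [Hd2 A2]].
  exists (Rmin d1 d2). split. apply Rmin_pos; auto. intros u v Hu Hv.
  assert (B1 := A1 u v ltac:(eapply Rlt_le_trans; [exact Hu|apply Rmin_l])
                       ltac:(eapply Rlt_le_trans; [exact Hv|apply Rmin_l])).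
  assert (B2 := A2 u v ltac:(eapply Rlt_le_trans; [exact Hu|apply Rmin_r])
                       ltac:(eapply Rlt_le_trans; [exact Hv|apply Rmin_r])).
  replace (G1 u v * G2 u v - G1 x y * G2 x y) with
    ((G1 u v - G1 x y) * (G2 u v - G2 x y) + (G1 u v - G1 x y) * G2 x y
     + G1 x y * (G2 u v - G2 x y)) by ring.
  eapply Rle_lt_trans. apply Cmod_triangle.
  eapply Rle_lt_trans. apply Rplus_le_compat_r. apply Cmod_triangle.
  rewrite !Cmod_mult.
  assert (Q1 := Cmod_ge_0 (G1 u v - G1 x y)). assert (Q2 := Cmod_ge_0 (G2 u v - G2 x y)).
  assert (E1 : (e <= 1)%R) by apply Rmin_l. assert (E2 : (e <= eps / A)%R) by apply Rmin_r.
  assert (E3 : (e * A <= eps)%R).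
  { apply Rle_trans with (eps / A * A)%R. apply Rmult_le_compat_r; lra. right; field; lra. }
  apply Rlt_le_trans with (e * A)%R; auto.
  unfold A. nra.
Qed.

Lemma cont2_comp (f : C -> C) (G : R -> R -> C) x y : @continuous CU CU f (G x y) -> cont2 G x y ->
  cont2 (fun u v => f (G u v)) x y.
Proof.
  intros Hf HG eps He.
  destruct (proj1 (filterlim_locally (U:=CU) f (f (G x y))) Hf (mkposreal eps He)) as [d1 A1].
  destruct (HG d1 (cond_pos d1)) as [d2 [Hd2 A2]]. exists d2. split; auto.
  intros u v Hu Hv. apply (A1 (G u v)). exact (A2 u v Hu Hv).
Qed.

Lemma cont2_section G x y : cont2 G x y -> path_cont (fun v => G x v) y.
Proof.
  intros H eps He. destruct (H eps He) as [d [Hd A]]. exists d. split; auto.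
  intros s Hs. apply A; auto. rewrite Rminus_diag, Rabs_R0. auto.
Qed.

Section RealCoordinate.
Variable k : C -> R.
Hypothesis Hk : real_coord k.

Lemma real_coord_le_Cmod_sub z w : (Rabs (k z - k w) <= Cmod (z - w))%R.
Proof. destruct Hk as [Hsub [_ Hle]]. rewrite <- Hsub. apply Hle. Qed.

Lemma real_coord_deriv g x m : path_deriv g x m -> is_derive (fun s => k (g s)) x (k m).
Proof.
  intros H. destruct Hk as [Hsub [Hscal Hle]].
  apply approx_is_derive. intros eps He. destruct (H eps He) as [d [Hd H']].
  exists d. split; auto. intros s Hs. eapply Rle_trans. 2: exact (H' s Hs).
  rewrite <- Hscal, <- !Hsub. apply Hle.
Qed.

Lemma real_coord_cont g x : path_cont g x -> continuous (fun s => k (g s)) x.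
Proof.
  intros H. apply (proj2 (filterlim_locally (fun s => k (g s)) (k (g x)))). intros eps.
  destruct (H eps (cond_pos eps)) as [d [Hd A]]. exists (mkposreal d Hd).
  intros s Hs. change (Rabs (k (g s) - k (g x)) < eps)%R.
  eapply Rle_lt_trans. apply real_coord_le_Cmod_sub. exact (A s Hs).
Qed.

Lemma real_coord_cont2 G x y : cont2 G x y -> continuity_2d_pt (fun u v => k (G u v)) x y.
Proof.
  intros H eps. destruct (H eps (cond_pos eps)) as [d [Hd A]]. exists (mkposreal d Hd).
  intros u v Hu Hv. eapply Rle_lt_trans. apply real_coord_le_Cmod_sub. exact (A u v Hu Hv).
Qed.
End RealCoordinate.

Lemma Cmod_eix p : Cmod (eix p) = 1%R.
Proof.
  unfold eix, Cmod. cbn [fst snd].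
  replace (cos p ^ 2 + sin p ^ 2)%R with 1%R. apply sqrt_1.
  rewrite <- (sin2_cos2 p). unfold Rsqr. ring.
Qed.

Lemma eix_neq0 p : eix p <> 0.
Proof. intro E. assert (H := Cmod_eix p). rewrite E, Cmod_0 in H. lra. Qed.

Lemma eix_0 : eix 0 = 1.
Proof. unfold eix. rewrite cos_0, sin_0. reflexivity. Qed.

Lemma eix_PI_opp : eix PI = eix (-PI)%R.
Proof. unfold eix. rewrite cos_neg, sin_neg, sin_PI. f_equal. ring. Qed.

Lemma eix_opp p : eix (- p)%R = / eix p.
Proof.
  assert (H : eix (- p)%R * eix p = 1).
  { unfold eix. rewrite cos_neg, sin_neg. unfold Cmult, RtoC; cbn [fst snd]. f_equal.
    rewrite <- (sin2_cos2 p). unfold Rsqr. ring. ring. }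
  rewrite <- (Cmult_1_l (/ eix p)), <- H. field. apply eix_neq0.
Qed.

Lemma unit_angle (w : C) : Cmod w = 1%R -> exists al, eix al = w.
Proof.
  intros Hw. destruct w as [w1 w2].
  assert (Hs : (w1 * w1 + w2 * w2 = 1)%R).
  { unfold Cmod in Hw; cbn [fst snd] in Hw. rewrite <- sqrt_1 in Hw. apply sqrt_inj in Hw.
    nra. nra. lra. }
  assert (Hb : (-1 <= w1 <= 1)%R) by nra.
  assert (Hsq : sqrt (1 - w1²) = Rabs w2).
  { rewrite <- sqrt_Rsqr_abs. f_equal. unfold Rsqr. lra. }
  destruct (Rle_dec 0 w2) as [P|P].
  - exists (acos w1). unfold eix. rewrite cos_acos, sin_acos, Hsq, Rabs_pos_eq; auto.
  - exists (- acos w1)%R. unfold eix.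
    rewrite cos_neg, sin_neg, cos_acos, sin_acos, Hsq, Rabs_left; auto.
    f_equal. ring. lra.
Qed.

Lemma ex_RInt_path_cont (g : R -> C) a0 b0 : (forall x, path_cont g x) ->
  ex_RInt (V:=C_R_CompleteNormedModule) g a0 b0.
Proof.
  intros H. eexists. apply (RInt_correct (V:=C_R_CompleteNormedModule)).
  apply (ex_RInt_fct_extend_pair (U:=R_NormedModule) (V:=R_NormedModule));
    apply (ex_RInt_continuous (V:=R_CompleteNormedModule)); intros.
  - apply (real_coord_cont fst real_coord_fst). auto.
  - apply (real_coord_cont snd real_coord_snd). auto.
Qed.

Lemma RInt_C_parts (g : R -> C) a b : (forall x, path_cont g x) ->
  RInt (V:=C_R_CompleteNormedModule) g a b =
  (RInt (fun x => fst (g x)) a b, RInt (fun x => snd (g x)) a b).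
Proof.
  intros Hc. apply is_RInt_unique.
  apply (is_RInt_fct_extend_pair (U:=R_NormedModule) (V:=R_NormedModule));
    apply (RInt_correct (V:=R_CompleteNormedModule));
    apply (ex_RInt_continuous (V:=R_CompleteNormedModule)); intros.
  - apply (real_coord_cont fst real_coord_fst). auto.
  - apply (real_coord_cont snd real_coord_snd). auto.
Qed.

Lemma RInt_reflect (g : R -> C) I :
  is_RInt (V:=C_R_CompleteNormedModule) g (-PI)%R PI I ->
  RInt (V:=C_R_CompleteNormedModule) (fun x => g (- x)%R) (-PI)%R PI = I.
Proof.
  intros H. apply is_RInt_unique.
  apply is_RInt_swap in H.
  assert (H2 := is_RInt_comp_opp (V:=C_R_CompleteNormedModule) g (-PI)%R PI (opp I)).
  rewrite Ropp_involutive in H2. specialize (H2 H).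
  apply is_RInt_opp in H2. rewrite opp_opp in H2.
  eapply is_RInt_ext. 2: exact H2. intros x _. simpl. apply opp_opp.
Qed.

(** ** Invariance of loop integrals *)

(** Let [h u] be a family of loops over [[-PI, PI]] whose [u]-derivative
    [D u v] is the [v]-derivative of [c u * h u v].  Then
    [d/du int h u = int d/dv (c u * h u) = 0] by periodicity, so the
    integral does not depend on [u]. *)
Section LoopIntegral.
Variables (h D : R -> R -> C) (c : R -> C).
Hypothesis HDu : forall u v, path_deriv (fun s => h s v) u (D u v).
Hypothesis HDv : forall u v, path_deriv (fun s => c u * h u s) v (D u v).
Hypothesis Hcont : forall u v, path_cont (fun s => h u s) v.
Hypothesis HDcont : forall u v, cont2 D u v.
Hypothesis Hper : forall u, h u PI = h u (-PI)%R.

Lemma coord_loop_integral_const k : real_coord k -> forall a b,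
  RInt (fun v => k (h a v)) (-PI)%R PI = RInt (fun v => k (h b v)) (-PI)%R PI.
Proof.
  intros Hk.
  set (J := fun u => RInt (fun v => k (h u v)) (-PI)%R PI).
  assert (HJ : forall u, is_derive J u 0%R).
  { intros u.
    assert (V : RInt (fun v => Derive (fun u0 => k (h u0 v)) u) (-PI)%R PI = 0%R).
    { rewrite (RInt_ext _ (fun v => k (D u v))).
      2:{ intros v _. apply is_derive_unique, (real_coord_deriv k Hk), HDu. }
      apply is_RInt_unique.
      assert (F := is_RInt_derive (fun v => k (c u * h u v)) (fun v => k (D u v)) (-PI)%R PI).
      cbv beta in F. rewrite Hper, minus_eq_zero in F. apply F.
      - intros v _. apply (real_coord_deriv k Hk), HDv.
      - intros v _. apply (real_coord_cont k Hk), cont2_section, HDcont. }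
    rewrite <- V. apply is_derive_RInt_param.
    - apply filter_forall. intros x0 v _. eexists. apply (real_coord_deriv k Hk), HDu.
    - intros v _. apply continuity_2d_pt_ext with (f := fun u v => k (D u v)).
      + intros x y. symmetry. apply is_derive_unique, (real_coord_deriv k Hk), HDu.
      + apply (real_coord_cont2 k Hk), HDcont.
    - apply filter_forall. intros y. apply (ex_RInt_continuous (V:=R_CompleteNormedModule)).
      intros z _. apply (real_coord_cont k Hk), Hcont. }
  intros a b. change (J a = J b).
  destruct (Rtotal_order a b) as [L|[L|L]].
  - apply (eq_is_derive (V:=R_NormedModule)); auto.
  - rewrite L; reflexivity.
  - symmetry. apply (eq_is_derive (V:=R_NormedModule)); auto.
Qed.

Lemma loop_integral_const a b :
  RInt (V:=C_R_CompleteNormedModule) (h a) (-PI)%R PI =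
  RInt (V:=C_R_CompleteNormedModule) (h b) (-PI)%R PI.
Proof.
  rewrite !RInt_C_parts by auto. f_equal.
  - apply coord_loop_integral_const, real_coord_fst.
  - apply coord_loop_integral_const, real_coord_snd.
Qed.
End LoopIntegral.

(** Cauchy's theorem for circles: for [f] holomorphic on [U] and a moving
    circle [x -> gm l * eix x] lying in [U], the integral of
    [f (gm l * eix x)] over [x] does not depend on [l].  Indeed the
    [l]-derivative of the integrand is the [x]-derivative of
    [gm' l / (i gm l)] times the integrand. *)
Lemma circle_integral_invariant U f (gm gm' : R -> C) l1 l2 :
  holo_on U f -> (forall x, path_deriv gm x (gm' x)) -> (forall x, path_cont gm' x) ->
  (forall x, gm x <> 0) -> (forall x p, U (gm x * eix p)) ->
  RInt (V:=C_R_CompleteNormedModule) (fun p => f (gm l1 * eix p)) (-PI)%R PI =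
  RInt (V:=C_R_CompleteNormedModule) (fun p => f (gm l2 * eix p)) (-PI)%R PI.
Proof.
  intros [f' Hf] Hg Hg' Hnz HU.
  assert (Df : forall u v, Cderiv_approx f (gm u * eix v) (f' (gm u * eix v)))
    by (intros; apply is_derive_Cderiv_approx, Hf, HU).
  assert (Ceix : forall v, path_cont eix v) by (intros; eapply path_deriv_cont, path_deriv_eix).
  assert (Hdv : forall u v, path_deriv (fun s => f (gm u * eix s)) v
                              (gm u * (Ci * eix v) * f' (gm u * eix v))).
  { intros u v. apply (path_deriv_comp f (fun s => gm u * eix s)); auto.
    apply path_deriv_scal, path_deriv_eix. }
  apply (loop_integral_const (fun u v => f (gm u * eix v))
           (fun u v => gm' u * eix v * f' (gm u * eix v)) (fun u => gm' u / (Ci * gm u))).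
  - intros u v. apply (path_deriv_comp f (fun s => gm s * eix v)); auto.
    assert (E := path_deriv_scal (eix v) gm u (gm' u) (Hg u)).
    intros eps He. destruct (E eps He) as [d [Hd H']]. exists d. split; auto.
    intros s Hs. eapply Rle_trans. 2: exact (H' s Hs). right. f_equal. ring.
  - intros u v. replace (gm' u * eix v * f' (gm u * eix v))
      with (gm' u / (Ci * gm u) * (gm u * (Ci * eix v) * f' (gm u * eix v))).
    + apply path_deriv_scal, Hdv.
    + field. split. apply Hnz. intro E. injection E. lra.
  - intros u v. eapply path_deriv_cont, Hdv.
  - intros u v.
    apply (cont2_mult (fun u v => gm' u * eix v) (fun u v => f' (gm u * eix v))).
    + apply (cont2_mult (fun u v => gm' u) (fun u v => eix v));
        [apply cont2_of_first | apply cont2_of_second]; auto.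
    + apply (cont2_comp f' (fun u v => gm u * eix v)). apply Hf, HU.
      apply (cont2_mult (fun u v => gm u) (fun u v => eix v));
        [apply cont2_of_first; eapply path_deriv_cont, Hg | apply cont2_of_second]; auto.
  - intros u. rewrite eix_PI_opp. reflexivity.
Qed.

(** ** Circle means of the quotient of q-Pochhammer products *)

Section CircleMeans.
Variables (q : C) (a b c d : list C) (t : C).
Hypothesis Hq1 : (Cmod q < 1)%R.

(** The integrand [F] of the theorem as a function of [x] (the left-hand side
    at [x = eix psi / sigma]), and its finite approximations [F_n]. *)
Definition F_lim (x : C) : C :=
  qpochL b (/ x) q * qpochL a (t * x) q / (qpochL d (/ x) q * qpochL c (t * x) q).

Definition F_part (n : nat) (x : C) : C :=
  qpochL_part q b Cinv n x * qpochL_part q a (Cmult t) n x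
  / (qpochL_part q d Cinv n x * qpochL_part q c (Cmult t) n x).

(** Radii of circles on which the denominators stay away from zero:
    [|d_l| < r < 1 / (|t| |c_k|)]. *)
Definition admissible (r : R) : Prop :=
  (0 < r)%R /\ (forall dl, In dl d -> (Cmod dl < r)%R) /\
  (forall ck, In ck c -> (Cmod t * Cmod ck * r < 1)%R).

Definition in_annulus (x : C) : Prop := admissible (Cmod x).

Lemma admissible_between r1 r2 r : admissible r1 -> admissible r2 ->
  (Rmin r1 r2 <= r <= Rmax r1 r2)%R -> admissible r.
Proof.
  intros [A1 [B1 C1]] [A2 [B2 C2]] [L1 L2].
  assert (M1 : (Rmin r1 r2 = r1 \/ Rmin r1 r2 = r2)%R)
    by (unfold Rmin; destruct (Rle_dec r1 r2); auto).
  assert (M2 : (Rmax r1 r2 = r1 \/ Rmax r1 r2 = r2)%R)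
    by (unfold Rmax; destruct (Rle_dec r1 r2); auto).
  split; [|split].
  - destruct M1 as [E|E]; rewrite E in L1; lra.
  - intros dl Hd. specialize (B1 dl Hd). specialize (B2 dl Hd).
    destruct M1 as [E|E]; rewrite E in L1; lra.
  - intros ck Hc. specialize (C1 ck Hc). specialize (C2 ck Hc).
    assert (P : (0 <= Cmod t * Cmod ck)%R) by (apply Rmult_le_pos; apply Cmod_ge_0).
    destruct M2 as [E|E]; rewrite E in L2; nra.
Qed.

Lemma in_annulus_neq0 x : in_annulus x -> x <> 0.
Proof. intros [H _] E. rewrite E, Cmod_0 in H. lra. Qed.

Lemma in_annulus_circle s p : admissible (Cmod s) -> in_annulus (s * eix p).
Proof. intros H. unfold in_annulus. rewrite Cmod_mult, Cmod_eix, Rmult_1_r. auto. Qed.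

Lemma admissible_Cmod_RtoC r : admissible r -> admissible (Cmod (RtoC r)).
Proof. intros H. rewrite Cmod_R, Rabs_pos_eq; auto. destruct H; lra. Qed.

Lemma holo_F_part n : holo_on in_annulus (F_part n).
Proof.
  assert (H1 : holo_on in_annulus Cinv).
  { apply (holo_on_inv in_annulus (fun x => x)). apply holo_on_id. apply in_annulus_neq0. }
  assert (H2 : holo_on in_annulus (Cmult t)).
  { apply (holo_on_mult in_annulus (fun _ => t) (fun x => x)).
    apply holo_on_const. apply holo_on_id. }
  apply holo_on_mult; [apply holo_on_mult; apply holo_on_qpochL_part; auto|].
  apply (holo_on_inv in_annulus (fun x => qpochL_part q d Cinv n x * qpochL_part q c (Cmult t) n x)).
  - apply holo_on_mult; apply holo_on_qpochL_part; auto.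
  - intros z Hz. assert (Hz0 := in_annulus_neq0 z Hz). destruct Hz as [P [Bd Bc]].
    apply Cmult_neq_0; apply qpochL_part_neq0; auto; intros ui Hi.
    + rewrite Cmod_mult, Cmod_inv by auto. specialize (Bd ui Hi).
      apply (Rmult_lt_reg_r (Cmod z)); auto. rewrite Rmult_assoc, Rinv_l by lra. lra.
    + rewrite !Cmod_mult. specialize (Bc ui Hi). nra.
Qed.

Lemma unif_approx_F_part s : admissible (Cmod s) ->
  unif_approx (fun x => Cmod x = Cmod s) F_part F_lim.
Proof.
  intros [P [Bd Bc]].
  set (S := fun x : C => Cmod x = Cmod s).
  assert (K1 : forall x, S x -> (Cmod (/ x) <= / Cmod s)%R).
  { intros x Hx. rewrite Cmod_inv, Hx. lra. apply Cmod_gt_0. rewrite Hx; lra. }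
  assert (K2 : forall x, S x -> Cmod (t * x) = (Cmod t * Cmod s)%R)
    by (intros x Hx; rewrite Cmod_mult, Hx; auto).
  assert (K2' : forall x, S x -> (Cmod (t * x) <= Cmod t * Cmod s)%R)
    by (intros x Hx; rewrite K2; auto; lra).
  apply unif_approx_mult; [|apply unif_approx_inv].
  - apply unif_approx_mult; eapply unif_approx_qpochL; eauto.
  - apply unif_approx_mult; eapply unif_approx_qpochL; eauto.
  - apply bounded_away_mult; apply bounded_away_qpochL; auto; intros ui Hi.
    + exists (Cmod ui / Cmod s)%R. split.
      * specialize (Bd ui Hi). apply (Rmult_lt_reg_r (Cmod s)); auto.
        unfold Rdiv. rewrite Rmult_assoc, Rinv_l by lra. lra.
      * intros x Hx. rewrite Cmod_mult. apply Rmult_le_compat_l. apply Cmod_ge_0. auto.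
    + exists (Cmod t * Cmod ui * Cmod s)%R. split. auto.
      intros x Hx. rewrite Cmod_mult, (K2 x Hx). right. ring.
Qed.

Lemma path_cont_F_part n s p : admissible (Cmod s) -> path_cont (fun p => F_part n (s * eix p)) p.
Proof.
  intros Hs. destruct (holo_F_part n) as [f' Hf]. eapply path_deriv_cont.
  apply (path_deriv_comp (F_part n) (fun p => s * eix p)).
  - apply is_derive_Cderiv_approx, Hf, in_annulus_circle, Hs.
  - apply path_deriv_scal, path_deriv_eix.
Qed.

Lemma F_part_circle_limit s : admissible (Cmod s) -> exists If,
  filterlim (fun n => RInt (V:=C_R_CompleteNormedModule) (fun p => F_part n (s * eix p)) (-PI)%R PI)
    eventually (locally If) /\
  is_RInt (V:=C_R_CompleteNormedModule) (fun p => F_lim (s * eix p)) (-PI)%R PI If.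
Proof.
  intros Hs.
  apply (filterlim_RInt (V:=C_R_CompleteNormedModule) (fun n p => F_part n (s * eix p))
           (-PI)%R PI eventually eventually_filter).
  - intros n. apply (RInt_correct (V:=C_R_CompleteNormedModule)).
    apply ex_RInt_path_cont. intros; apply path_cont_F_part, Hs.
  - apply (proj2 (filterlim_locally (U := fct_UniformSpace R C_R_CompleteNormedModule) _ _)).
    intros eps. destruct (unif_approx_F_part s Hs) as [_ Hu].
    destruct (Hu eps (cond_pos eps)) as [N HN].
    exists N. intros n Hn p. apply Cmod_lt_ball, HN; auto.
    rewrite Cmod_mult, Cmod_eix. ring.
Qed.

(** Cauchy: the circle integral of [F_n] is the same for all admissible
    radii (radial homotopy [r1 + (r2 - r1) sin^2 l]) ... *)
Lemma F_part_radius_invariant n r1 r2 : admissible r1 -> admissible r2 ->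
  RInt (V:=C_R_CompleteNormedModule) (fun p => F_part n (RtoC r1 * eix p)) (-PI)%R PI =
  RInt (V:=C_R_CompleteNormedModule) (fun p => F_part n (RtoC r2 * eix p)) (-PI)%R PI.
Proof.
  intros H1 H2.
  set (r := fun l => (r1 + (r2 - r1) * sin l ^ 2)%R).
  assert (Hr : forall l, (Rmin r1 r2 <= r l <= Rmax r1 r2)%R).
  { intros l. assert (A0 : (0 <= sin l ^ 2)%R) by apply pow2_ge_0.
    assert (A1 : (sin l ^ 2 <= 1)%R).
    { assert (X := sin2_cos2 l). unfold Rsqr in X.
      assert (Y := pow2_ge_0 (cos l)). simpl in *. nra. }
    unfold r, Rmin, Rmax. destruct (Rle_dec r1 r2); split; nra. }
  assert (Hpos : forall l, (0 < r l)%R).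
  { intros l. destruct (Hr l) as [A _]. destruct H1 as [P1 _], H2 as [P2 _].
    unfold Rmin in A. destruct (Rle_dec r1 r2); lra. }
  replace (RtoC r1) with (RtoC (r 0%R)) by (unfold r; rewrite sin_0; f_equal; ring).
  replace (RtoC r2) with (RtoC (r (PI / 2)%R)) by (unfold r; rewrite sin_PI2; f_equal; ring).
  apply (circle_integral_invariant in_annulus (F_part n) (fun l => RtoC (r l))
           (fun l => RtoC ((r2 - r1) * (2 * sin l * cos l))%R)).
  - apply holo_F_part.
  - intros x. apply path_deriv_of_parts; unfold r; simpl.
    + auto_derive. auto. ring.
    + apply (is_derive_const (K:=R_AbsRing) (V:=R_NormedModule) 0%R x).
  - intros x. apply path_cont_of_parts; simpl.
    + apply (ex_derive_continuous (K:=R_AbsRing) (V:=R_NormedModule)). auto_derive. auto.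
    + apply continuous_const.
  - intros x E. apply (f_equal fst) in E. simpl in E. specialize (Hpos x). lra.
  - intros x p. apply in_annulus_circle, admissible_Cmod_RtoC.
    apply (admissible_between r1 r2); auto.
Qed.

Lemma F_part_rotation_invariant n r al : admissible r ->
  RInt (V:=C_R_CompleteNormedModule) (fun p => F_part n (RtoC r * eix p)) (-PI)%R PI =
  RInt (V:=C_R_CompleteNormedModule) (fun p => F_part n (RtoC r * eix al * eix p)) (-PI)%R PI.
Proof.
  intros H.
  assert (E := circle_integral_invariant in_annulus (F_part n) (fun l => RtoC r * eix l)
                 (fun l => RtoC r * (Ci * eix l)) 0%R al (holo_F_part n)).
  cbv beta in E. rewrite eix_0, Cmult_1_r in E. apply E; clear E.
  - intros x. apply path_deriv_scal, path_deriv_eix.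
  - intros x. eapply path_deriv_cont, path_deriv_scal, path_deriv_scal, path_deriv_eix.
  - intros x. apply Cmult_neq_0. intro E. apply (f_equal fst) in E. simpl in E. destruct H; lra.
    apply eix_neq0.
  - intros x p. apply in_annulus_circle. rewrite Cmod_mult, Cmod_eix, Rmult_1_r.
    apply admissible_Cmod_RtoC, H.
Qed.

Lemma F_lim_circle_integrals r1 r2 al : admissible r1 -> admissible r2 -> exists If,
  is_RInt (V:=C_R_CompleteNormedModule) (fun p => F_lim (RtoC r1 * eix p)) (-PI)%R PI If /\
  is_RInt (V:=C_R_CompleteNormedModule) (fun p => F_lim (RtoC r2 * eix al * eix p)) (-PI)%R PI If.
Proof.
  intros H1 H2.
  destruct (F_part_circle_limit (RtoC r1) (admissible_Cmod_RtoC r1 H1)) as [I1 [L1 R1]].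
  assert (H2' : admissible (Cmod (RtoC r2 * eix al)))
    by (rewrite Cmod_mult, Cmod_eix, Rmult_1_r; apply admissible_Cmod_RtoC; auto).
  destruct (F_part_circle_limit (RtoC r2 * eix al) H2') as [I2 [L2 R2]].
  assert (L1' : filterlim (fun n => RInt (V:=C_R_CompleteNormedModule)
                  (fun p => F_part n (RtoC r2 * eix al * eix p)) (-PI)%R PI) eventually (locally I1)).
  { apply (filterlim_ext (fun n => RInt (V:=C_R_CompleteNormedModule)
             (fun p => F_part n (RtoC r1 * eix p)) (-PI)%R PI)); [|exact L1].
    intros n. rewrite (F_part_radius_invariant n r1 r2 H1 H2).
    apply F_part_rotation_invariant, H2. }
  assert (E : I2 = I1) by exact (filterlim_locally_unique (V:=C_R_NormedModule) _ I2 I1 L2 L1').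
  rewrite E in R2. exists I1. auto.
Qed.
End CircleMeans.

Lemma admissible_inv_sigma (c d : list C) (t : C) (sigma : R) :
  (0 < sigma)%R -> t <> 0 ->
  (forall dl, In dl d -> (Cmod dl < 1 / sigma)%R) ->
  (forall ck, In ck c -> (Cmod ck < sigma / Cmod t)%R) ->
  admissible c d t (/ sigma).
Proof.
  intros Hs Ht Hd Hc.
  assert (Htm : (0 < Cmod t)%R) by exact (proj1 (Cmod_gt_0 t) Ht).
  split; [|split].
  - apply Rinv_0_lt_compat; auto.
  - intros dl Hdl. specialize (Hd dl Hdl). unfold Rdiv in Hd. lra.
  - intros ck Hck. specialize (Hc ck Hck).
    apply (Rmult_lt_reg_r sigma); auto. rewrite Rmult_assoc, Rinv_l, Rmult_1_r by lra.
    apply (Rmult_lt_reg_l (/ Cmod t)). apply Rinv_0_lt_compat; auto.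
    rewrite <- Rmult_assoc, Rinv_l by lra. unfold Rdiv in Hc. lra.
Qed.

Lemma admissible_tau_over_t (c d : list C) (t : C) (tau : R) :
  (0 < tau)%R -> t <> 0 ->
  (forall dl, In dl d -> (Cmod dl < tau / Cmod t)%R) ->
  (forall ck, In ck c -> (Cmod ck < 1 / tau)%R) ->
  admissible c d t (tau / Cmod t).
Proof.
  intros Htau Ht Hd Hc.
  assert (Htm : (0 < Cmod t)%R) by exact (proj1 (Cmod_gt_0 t) Ht).
  split; [|split]; auto.
  - apply Rdiv_lt_0_compat; auto.
  - intros ck Hck. specialize (Hc ck Hck).
    replace (Cmod t * Cmod ck * (tau / Cmod t))%R with (Cmod ck * tau)%R by (field; lra).
    apply (Rmult_lt_reg_r (/ tau)). apply Rinv_0_lt_compat; auto.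
    rewrite Rmult_assoc, Rinv_r by lra. unfold Rdiv in Hc. lra.
Qed.

Lemma polar_tau_over_t (t : C) (tau : R) : (0 < tau)%R -> t <> 0 ->
  exists al, RtoC (tau / Cmod t) * eix al = RtoC tau / t.
Proof.
  intros Htau Ht.
  assert (Htm : (0 < Cmod t)%R) by exact (proj1 (Cmod_gt_0 t) Ht).
  assert (Ctm : RtoC (Cmod t) <> 0) by (intro E; apply (f_equal fst) in E; simpl in E; lra).
  assert (Hw : Cmod (Cconj t / RtoC (Cmod t)) = 1%R).
  { rewrite Cmod_div by exact Ctm. rewrite Cmod_conj, Cmod_R, Rabs_pos_eq by lra.
    field. lra. }
  destruct (unit_angle _ Hw) as [al Hal]. exists al. rewrite Hal.
  assert (Cc : Cconj t = RtoC (Cmod t ^ 2) / t) by (rewrite Cmod2_conj; field; exact Ht).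
  rewrite RtoC_div by lra. rewrite Cc, RtoC_pow. field. split; auto.
Qed.

Lemma left_integrand (q : C) (a b c d : list C) (t : C) (sigma psi : R) : (0 < sigma)%R ->
  (qpochL b (RtoC sigma / eix psi) q * qpochL a (t * eix psi / RtoC sigma) q)
  / (qpochL d (RtoC sigma / eix psi) q * qpochL c (t * eix psi / RtoC sigma) q)
  = F_lim q a b c d t (RtoC (/ sigma) * eix psi).
Proof.
  intros Hs. unfold F_lim.
  assert (Ep := eix_neq0 psi).
  assert (Es : RtoC sigma <> 0) by (intro E; apply (f_equal fst) in E; simpl in E; lra).
  rewrite RtoC_inv by lra.
  replace (/ (/ RtoC sigma * eix psi)) with (RtoC sigma / eix psi) by (field; auto).
  replace (t * (/ RtoC sigma * eix psi)) with (t * eix psi / RtoC sigma) by (field; auto).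
  reflexivity.
Qed.

Lemma right_integrand (q : C) (a b c d : list C) (t : C) (tau eta : R) :
  (0 < tau)%R -> t <> 0 ->
  (qpochL a (RtoC tau / eix eta) q * qpochL b (t * eix eta / RtoC tau) q)
  / (qpochL c (RtoC tau / eix eta) q * qpochL d (t * eix eta / RtoC tau) q)
  = F_lim q a b c d t (RtoC tau / t * eix (- eta)%R).
Proof.
  intros Htau Ht. unfold F_lim. rewrite eix_opp.
  assert (Ep := eix_neq0 eta).
  assert (Es : RtoC tau <> 0) by (intro E; apply (f_equal fst) in E; simpl in E; lra).
  replace (/ (RtoC tau / t * / eix eta)) with (t * eix eta / RtoC tau) by (field; auto).
  replace (t * (RtoC tau / t * / eix eta)) with (RtoC tau / eix eta) by (field; auto).
  rewrite (Cmult_comm (qpochL a _ q)), (Cmult_comm (qpochL c _ q)). reflexivity.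
Qed.

Theorem lemma2p13 (q : C) (a b c d : list C) (sigma tau : R) (t : C) :
  (0 < Cmod q)%R -> (Cmod q < 1)%R ->
  (0 < length a + length b + length c + length d)%nat ->
  (0 < sigma)%R -> (0 < tau)%R -> t <> 0 ->
  (forall bj dl, In bj b -> In dl d -> (Cmod bj < Cmod dl)%R) ->
  (forall dl, In dl d -> (Cmod dl < Rmin (tau / Cmod t) (1 / sigma))%R) ->
  (forall ai dl, In ai a -> In dl d -> (Cmod (dl * ai) < 1 / Cmod t)%R) ->
  (forall ai ck, In ai a -> In ck c -> (Cmod ai < Cmod ck)%R) ->
  (forall ck, In ck c -> (Cmod ck < Rmin (sigma / Cmod t) (1 / tau))%R) ->
  RInt (V := C_R_CompleteNormedModule)
    (fun psi : R =>
       (qpochL b (RtoC sigma / eix psi) q * qpochL a (t * eix psi / RtoC sigma) q)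
       / (qpochL d (RtoC sigma / eix psi) q * qpochL c (t * eix psi / RtoC sigma) q))
    (- PI) PI
  =
  RInt (V := C_R_CompleteNormedModule)
    (fun eta : R =>
       (qpochL a (RtoC tau / eix eta) q * qpochL b (t * eix eta / RtoC tau) q)
       / (qpochL c (RtoC tau / eix eta) q * qpochL d (t * eix eta / RtoC tau) q))
    (- PI) PI.
Proof.
  intros _ Hq1 _ Hs Htau Ht _ Hd _ _ Hc.
  (* Only the denominators matter: both circles lie in the admissible annulus. *)
  assert (U1 : admissible c d t (/ sigma)).
  { apply admissible_inv_sigma; auto; intros.
    - eapply Rlt_le_trans; [apply Hd; auto | apply Rmin_r].
    - eapply Rlt_le_trans; [apply Hc; auto | apply Rmin_l]. }
  assert (U2 : admissible c d t (tau / Cmod t)).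
  { apply admissible_tau_over_t; auto; intros.
    - eapply Rlt_le_trans; [apply Hd; auto | apply Rmin_l].
    - eapply Rlt_le_trans; [apply Hc; auto | apply Rmin_r]. }
  destruct (polar_tau_over_t t tau Htau Ht) as [al Hal].
  destruct (F_lim_circle_integrals q a b c d t Hq1 _ _ al U1 U2) as [If [I1 I2]].
  rewrite Hal in I2.
  transitivity If.
  - apply is_RInt_unique. eapply is_RInt_ext; [|exact I1].
    intros psi _. symmetry. apply left_integrand, Hs.
  - rewrite <- (RInt_reflect _ If I2). apply RInt_ext.
    intros eta _. symmetry. apply right_integrand; auto.
Qed.
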